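(* If $T$ is a tree with $n$ vertices, then $\nu^*(P_n)\le \nu^*(T)\le \nu^*(K_{1,n-1})$.
   Context: For a finite simple graph $G=(V,E)$ with $\ell=|V|+|E|$, a construction sequence (c-sequence) is a bijection $x:\{1,\dots,\ell\}\to V\sqcup E$ such that every edge $e=uw$ satisfies $x^{-1}(e)>\max\{x^{-1}(u),x^{-1}(w)\}$. The cost of $x$ is $\nu(x)=\sum_{e=uw\in E}\big(2x^{-1}(e)-x^{-1}(u)-x^{-1}(w)\big)$, and $\nu^*(G)$ is the maximum of $\nu(x)$ over all c-sequences for $G$. $P_n$ is the path on $n$ vertices and $K_{1,n-1}$ is the star with a hub adjacent to $n-1$ leaves. *)

From HB Require Import structures.
From mathcomp Require Import all_boot.
Set Warnings "-notation-overridden".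
Set Implicit Arguments. Unset Strict Implicit. Unset Printing Implicit Defensive.

Definition simple_graph (V : finType) (E : {set {set V}}) : Prop :=
  forall e, e \in E -> #|e| = 2.

Definition adj (V : finType) (E : {set {set V}}) : rel V :=
  fun u w => (u != w) && ([set u; w] \in E).

Definition connected_graph (V : finType) (E : {set {set V}}) : Prop :=
  forall u w : V, connect (adj E) u w.

Definition acyclic (V : finType) (E : {set {set V}}) : Prop :=
  ~ exists p : seq V, [/\ 3 <= size p, uniq p & cycle (adj E) p].

Definition is_tree (V : finType) (E : {set {set V}}) : Prop :=
  simple_graph E /\ connected_graph E /\ acyclic E.

Definition edge (V : finType) (E : {set {set V}}) := {e : {set V} | e \in E}.

Definition elem (V : finType) (E : {set {set V}}) := (V + edge E)%type.

Definition ell (V : finType) (E : {set {set V}}) := #|V| + #|E|.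

(* pos = x^{-1} shifted by one: element z sits at position (pos z + 1) in
   {1,...,ell}.  A c-sequence x is a bijection 'I_ell -> V ⊔ E, equivalently
   its inverse pos is an injection V ⊔ E -> 'I_ell (the cardinalities agree). *)
Definition is_cseq (V : finType) (E : {set {set V}})
  (pos : {ffun elem E -> 'I_(ell E)}) : bool :=
  injectiveb pos &&
  [forall e : edge E, forall u : V, (u \in val e) ==> (pos (inl u) < pos (inr e))].

Definition cost (V : finType) (E : {set {set V}})
  (pos : {ffun elem E -> 'I_(ell E)}) : nat :=
  \sum_(e : edge E)
     (2 * (pos (inr e)).+1 - \sum_(u in val e) (pos (inl u)).+1).

Definition nu_star (V : finType) (E : {set {set V}}) : nat :=
  \max_(pos : {ffun elem E -> 'I_(ell E)} | is_cseq pos) cost pos.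

Definition path_edges (n : nat) : {set {set 'I_n}} :=
  [set e : {set 'I_n} | [exists i : 'I_n, exists j : 'I_n,
     ((j : nat) == (i : nat).+1) && (e == [set i; j])]].

Definition star_edges (n : nat) : {set {set 'I_n}} :=
  [set e : {set 'I_n} | [exists i : 'I_n, exists j : 'I_n,
     [&& (i : nat) == 0, (j : nat) != 0 & e == [set i; j]]]].

From mathcomp Require Import all_boot zify.
Set Implicit Arguments. Unset Strict Implicit. Unset Printing Implicit Defensive.

(* Write S k = 0 + 1 + ... + (k - 1) and describe a c-sequence by the positions
   pos z in {0, ..., ell - 1} of the elements z of V + E.  The shift by one in
   [cost] cancels edge by edge and the positions exhaust {0, ..., ell - 1}, so
     cost pos + sum_v (deg v + 2) * pos v = 2 S(ell).
   Maximising the cost therefore means minimising this vertex weight.  For a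
   tree on n >= 2 vertices ell = 2n - 1 and all degrees are positive, so the
   weight is at least 3 S(n) + S(k), with k the number of vertices of degree at
   least 2 (their positions are distinct).  Listing the vertices first, hub
   first, the star attains 3 S(n).  For the path k = n - 2, while listing the
   vertices of any tree first, those of degree at least 2 in front, gives weight
   at most 3 S(n) + S(n - 2), since the excess degrees deg v - 1 sum to n - 2. *)

Lemma sum_ord_mono a b : a <= b -> \sum_(i < a) i <= \sum_(i < b) i.
Proof. by move=> le_ab; rewrite -(subnKC le_ab) big_split_ord leq_addr. Qed.

Lemma sum_ord_le_sum_sorted (a : nat) (s : seq nat) :
  sorted ltn s -> all (leq a) s -> \sum_(i < size s) (a + i) <= \sum_(x <- s) x.
Proof.
elim: s a => [|x s IHs] a /=; first by rewrite big_ord0.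
move=> sorted_xs /andP[le_ax all_a].
have lt_x : all (leq x.+1) s := order_path_min ltn_trans sorted_xs.
rewrite big_ord_recl big_cons addn0 leq_add //.
apply: leq_trans (IHs a.+1 (path_sorted sorted_xs) _); last first.
  by apply: sub_all lt_x => y; apply: leq_trans.
by apply: leq_sum => i _; rewrite /bump addnS.
Qed.

Lemma sum_ord_le_sum_uniq (s : seq nat) :
  uniq s -> \sum_(i < size s) i <= \sum_(x <- s) x.
Proof.
move=> uniq_s; have perm_s : perm_eq (sort leq s) s by rewrite perm_sort.
rewrite -(perm_big _ perm_s) -(perm_size perm_s).
apply: leq_trans (@sum_ord_le_sum_sorted 0 (sort leq s) _ _) => //; last by apply/allP.
by rewrite ltn_sorted_uniq_leq sort_uniq uniq_s sort_sorted //; apply: leq_total.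
Qed.

Lemma sum_ord_le_sum_inj (T : finType) (A : {pred T}) (f : T -> nat) :
  {in A &, injective f} -> \sum_(i < #|A|) i <= \sum_(x in A) f x.
Proof.
move=> inj_f; have uniq_fA : uniq [seq f x | x <- enum A].
  by rewrite map_inj_in_uniq ?enum_uniq // => x y; rewrite !mem_enum; apply: inj_f.
by have := sum_ord_le_sum_uniq uniq_fA; rewrite size_map -cardE big_map big_enum.
Qed.

Lemma sum_inj_ord (T : finType) m (f : T -> 'I_m) :
  injective f -> #|T| = m -> \sum_x f x = \sum_(i < m) i.
Proof.
move=> inj_f card_T; rewrite [RHS](reindex f) //.
by apply: onW_bij; apply: inj_card_bij; rewrite ?card_ord ?card_T.
Qed.

Lemma sum_weight_index_le (T : eqType) (t : T -> nat) (s : seq T) :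
  uniq s -> {in s, forall v, 0 < t v} ->
  \sum_(v <- s) t v * index v s <= \sum_(k < \sum_(v <- s) t v) k.
Proof.
suff shifted a : uniq s -> {in s, forall v, 0 < t v} ->
    \sum_(v <- s) t v * (a + index v s) <= \sum_(k < \sum_(v <- s) t v) (a + k).
  exact: shifted 0.
elim: s a => [|x s IHs] a /=; first by rewrite !big_nil big_ord0.
move=> /andP[x_notin_s uniq_s] t_gt0.
rewrite !big_cons eqxx addn0 big_split_ord leq_add //.
  by rewrite -[X in X * a]card_ord -sum_nat_const leq_sum // => k _; rewrite leq_addr.
have t_x : 0 < t x by apply: t_gt0; rewrite inE eqxx.
rewrite (eq_big_seq (fun v => t v * (a.+1 + index v s))); last first.
  move=> v v_s; have x_neq_v : x != v by apply: contraNneq x_notin_s => ->.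
  by rewrite /= (negbTE x_neq_v) addnS.
apply: leq_trans (IHs a.+1 uniq_s _) _; first by move=> v v_s; apply: t_gt0; rewrite inE v_s orbT.
by apply: leq_sum => k _ /=; lia.
Qed.

Lemma exists_rank_weight_le (T : finType) (t : T -> nat) :
  exists2 r : T -> 'I_#|T|, injective r & \sum_x t x * r x <= \sum_(k < \sum_x t x) k.
Proof.
pose a := [pred x | 0 < t x]; pose s := filter a (enum T) ++ filter (predC a) (enum T).
have perm_s : perm_eq s (enum T) by rewrite perm_filterC.
have mem_s x : x \in s by rewrite (perm_mem perm_s) mem_enum.
have index_lt x : index x s < #|T| by rewrite cardE -(perm_size perm_s) index_mem.
exists (fun x => Ordinal (index_lt x)).
  by move=> x y [] /(index_inj x (mem_s x) (mem_s y)).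
have perm_idx : perm_eq (index_enum T) s by rewrite perm_sym [index_enum T]unlock -enumT.
rewrite /= !(perm_big _ perm_idx) big_cat /= [X in _ + X]big1_seq /=; last first.
  by move=> x; rewrite mem_filter /= lt0n negbK => /andP[/eqP-> _].
have le_tail : \sum_(x <- filter a (enum T)) t x <= \sum_(x <- s) t x.
  by rewrite big_cat leq_addr.
rewrite addn0; apply: (leq_trans _ (sum_ord_mono le_tail)).
rewrite (eq_big_seq (fun x => t x * index x (filter a (enum T)))); last first.
  by move=> x x_a; rewrite /= index_cat x_a.
apply: sum_weight_index_le; first by rewrite filter_uniq ?enum_uniq.
by move=> x; rewrite mem_filter => /andP[].
Qed.

Section Degree.

Variables (V : finType) (E : {set {set V}}).

Definition deg (v : V) : nat := #|[set e in E | v \in e]|.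

Lemma big_edge (F : {set V} -> nat) : \sum_(e : edge E) F (val e) = \sum_(e in E) F e.
Proof. exact: esym (big_sub E F). Qed.

Lemma card_edge : #|{: edge E}| = #|E|.
Proof. by rewrite card_sig; apply: eq_card. Qed.

Lemma sum_incident (F : V -> nat) :
  \sum_(e in E) \sum_(u in e) F u = \sum_v deg v * F v.
Proof.
rewrite (exchange_big_dep xpredT) //=; apply: eq_bigr => v _.
by rewrite sum_nat_const /deg cardsE.
Qed.

Lemma handshake : simple_graph E -> \sum_v deg v = 2 * #|E|.
Proof.
move=> simpleE; transitivity (\sum_v deg v * 1).
  by apply: eq_bigr => v _; rewrite muln1.
rewrite -sum_incident (eq_bigr (fun=> 2)) => [|e e_E]; last by rewrite sum1_card simpleE.
by rewrite sum_nat_const mulnC.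
Qed.

Lemma deg_gt0 v e : e \in E -> v \in e -> 0 < deg v.
Proof. by move=> e_E v_e; apply/card_gt0P; exists e; rewrite inE e_E. Qed.

Lemma deg_gt1 v e1 e2 : e1 \in E -> e2 \in E -> e1 != e2 -> v \in e1 -> v \in e2 -> 1 < deg v.
Proof.
by move=> e1_E e2_E e12 v_e1 v_e2; apply/card_gt1P; exists e1, e2; rewrite !inE e1_E e2_E.
Qed.

Lemma connected_deg_gt0 v : connected_graph E -> 1 < #|V| -> 0 < deg v.
Proof.
move=> connE /card_gt1P[x [y [_ _ x_neq_y]]].
have [w w_neq_v] : exists w, w != v.
  by case: (eqVneq x v) => [<-|]; [exists y; rewrite eq_sym | exists x].
have /connectP[[|z p] /= walk w_last] := connE v w; first by rewrite w_last eqxx in w_neq_v.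
case/andP: walk => /andP[_ vz_E] _.
by apply: deg_gt0 vz_E _; rewrite !inE eqxx.
Qed.

End Degree.

Section Cost.

Variables (V : finType) (E : {set {set V}}).
Hypothesis simpleE : simple_graph E.

Lemma sum_positions (pos : {ffun elem E -> 'I_(ell E)}) : is_cseq pos ->
  \sum_v pos (inl v) + \sum_(e : edge E) pos (inr e) = \sum_(i < ell E) i.
Proof.
case/andP => /injectiveP inj_pos _.
rewrite -(big_sumType _ xpredT (fun z => nat_of_ord (pos z))).
by apply: sum_inj_ord; rewrite // card_sum card_edge.
Qed.

Lemma edge_cost_add (e : {set V}) (p : V -> nat) (q : nat) :
  #|e| = 2 -> (forall u, u \in e -> p u < q) ->
  2 * q.+1 - \sum_(u in e) (p u).+1 + \sum_(u in e) p u = 2 * q.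
Proof.
move=> card_e lt_q.
have -> : \sum_(u in e) (p u).+1 = \sum_(u in e) p u + 2.
  by rewrite -card_e -sum1_card -big_split; apply: eq_bigr => u _ /=; rewrite addn1.
have : \sum_(u in e) p u <= 2 * q.
  by rewrite -card_e -sum_nat_const; apply: leq_sum => u /lt_q /ltnW.
lia.
Qed.

Lemma cost_add_incident (pos : {ffun elem E -> 'I_(ell E)}) : is_cseq pos ->
  cost pos + \sum_v deg E v * pos (inl v) = 2 * \sum_(e : edge E) pos (inr e).
Proof.
case/andP => _ /forallP edge_after.
rewrite /cost -sum_incident -(big_edge E (fun e => \sum_(u in e) (pos (inl u) : nat))).
rewrite -big_split big_distrr /=; apply: eq_bigr => e _; apply: edge_cost_add.
  exact: simpleE (valP e).
by move=> u u_e; have /forallP/(_ u)/implyP := edge_after e; apply.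
Qed.

Lemma cost_add_vertex_weight (pos : {ffun elem E -> 'I_(ell E)}) : is_cseq pos ->
  cost pos + \sum_v (deg E v + 2) * pos (inl v) = 2 * \sum_(i < ell E) i.
Proof.
move=> cseq_pos; have := cost_add_incident cseq_pos; have := sum_positions cseq_pos.
have -> : \sum_v (deg E v + 2) * pos (inl v) =
          \sum_v deg E v * pos (inl v) + 2 * \sum_v pos (inl v).
  by rewrite big_distrr -big_split; apply: eq_bigr => v _ /=; rewrite mulnDl mulnC.
lia.
Qed.

Lemma vertex_weight_ge (pos : {ffun elem E -> 'I_(ell E)}) :
  (forall v, 0 < deg E v) -> is_cseq pos ->
  3 * \sum_(i < #|V|) i + \sum_(i < #|[set v | 1 < deg E v]|) i
    <= \sum_v (deg E v + 2) * pos (inl v).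
Proof.
move=> deg_gt0 /andP[/injectiveP inj_pos _].
have inj_vpos (A : {pred V}) : {in A &, injective (fun v => nat_of_ord (pos (inl v)))}.
  by move=> x y _ _ /val_inj/inj_pos[].
have le_all := sum_ord_le_sum_inj (inj_vpos V).
have le_branch := sum_ord_le_sum_inj (inj_vpos [set v | 1 < deg E v]).
apply: leq_trans (_ : 3 * \sum_v pos (inl v) + \sum_(v in [set v | 1 < deg E v]) pos (inl v) <= _).
  by rewrite leq_add // leq_mul2l.
rewrite big_distrr [X in _ + X]big_mkcond /= -big_split leq_sum //= => v _; rewrite inE.
by have := deg_gt0 v; case: (ltnP 1 (deg E v)); nia.
Qed.

Lemma nu_star_le : (forall v, 0 < deg E v) ->
  nu_star E <= 2 * \sum_(i < ell E) i
                - (3 * \sum_(i < #|V|) i + \sum_(i < #|[set v | 1 < deg E v]|) i).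
Proof.
move=> deg_gt0; apply/bigmax_leqP => pos cseq_pos.
have := cost_add_vertex_weight cseq_pos; have := vertex_weight_ge deg_gt0 cseq_pos; lia.
Qed.

Lemma edge_rank_lt (e : edge E) : #|V| + enum_rank e < ell E.
Proof. by rewrite ltn_add2l -card_edge. Qed.

Definition vertex_first (r : V -> 'I_#|V|) : {ffun elem E -> 'I_(ell E)} :=
  [ffun z => match z with
             | inl v => widen_ord (leq_addr _ _) (r v)
             | inr e => Ordinal (edge_rank_lt e)
             end].

Lemma vertex_first_cseq (r : V -> 'I_#|V|) : injective r -> is_cseq (vertex_first r).
Proof.
move=> inj_r; apply/andP; split.
  apply/injectiveP => -[v|e] [w|f]; rewrite !ffunE => /(congr1 val) /=.
  - by move/val_inj/inj_r->.
  - by move=> eq_vf; have := ltn_ord (r v); rewrite eq_vf ltnNge leq_addr.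
  - by move=> eq_ew; have := ltn_ord (r w); rewrite -eq_ew ltnNge leq_addr.
  - by move/addnI/val_inj/enum_rank_inj->.
apply/forallP => e; apply/forallP => u; apply/implyP => _; rewrite !ffunE /=.
exact: leq_trans (ltn_ord (r u)) (leq_addr _ _).
Qed.

Lemma nu_star_ge_vertex_first (r : V -> 'I_#|V|) : injective r ->
  2 * \sum_(i < ell E) i <= nu_star E + \sum_v (deg E v + 2) * r v.
Proof.
move=> inj_r; have cseq_r := vertex_first_cseq inj_r.
rewrite -(cost_add_vertex_weight cseq_r) leq_add ?leq_bigmax_cond //.
by under eq_bigr do rewrite ffunE.
Qed.

Lemma nu_star_ge : (forall v, 0 < deg E v) ->
  2 * \sum_(i < ell E) i
    <= nu_star E + 3 * \sum_(i < #|V|) i + \sum_(i < 2 * #|E| - #|V|) i.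
Proof.
move=> deg_gt0; have [r inj_r weight_le] := exists_rank_weight_le (fun v => (deg E v).-1).
apply: leq_trans (nu_star_ge_vertex_first inj_r) _; rewrite -addnA leq_add2l.
have sum_excess : \sum_v (deg E v).-1 = 2 * #|E| - #|V|.
  rewrite -(handshake simpleE).
  suff -> : \sum_v deg E v = \sum_v (deg E v).-1 + #|V| by rewrite addnK.
  by rewrite -sum1_card -big_split; apply: eq_bigr => v _ /=; rewrite addn1 prednK.
have split_weight : \sum_v (deg E v + 2) * r v = 3 * \sum_v r v + \sum_v (deg E v).-1 * r v.
  rewrite big_distrr -big_split; apply: eq_bigr => v _ /=.
  by rewrite -mulnDl; congr (_ * _); have := deg_gt0 v; lia.
rewrite split_weight (sum_inj_ord inj_r) // -sum_excess leq_add2l.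
exact: weight_le.
Qed.

Lemma nu_star_small : #|V| <= 1 -> nu_star E = 0.
Proof.
move=> small_V; apply/eqP; rewrite -leqn0; apply/bigmax_leqP => pos _.
rewrite /cost big1 // => e _; have := max_card (val e); rewrite (simpleE (valP e)); lia.
Qed.

End Cost.

Section Trees.

Variables (V : finType) (E : {set {set V}}).

Lemma adj_sym : symmetric (adj E).
Proof. by move=> u w; rewrite /adj eq_sym setUC. Qed.

Lemma adj_neq u w : adj E u w -> u != w.
Proof. by case/andP. Qed.

Definition induced (S : {set V}) : {set {set V}} := [set e in E | e \subset S].

Lemma connected_cut (S : {set V}) a b : connected_graph E -> a \in S -> b \notin S ->
  [exists u in S, exists w in ~: S, adj E u w].
Proof.
move=> connE aS bS; apply: contraT; rewrite negb_exists_in => /forall_inP no_cut.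
have closedS : closed (adj E) S.
  suff stay u w : adj E u w -> u \in S -> w \in S.
    by move=> u w uw; apply/idP/idP; apply: stay; rewrite // adj_sym.
  move=> uw uS; apply: contraT => wS; have := no_cut u uS.
  by rewrite negb_exists_in => /forall_inP/(_ w); rewrite inE uw; apply.
by have := closed_connect closedS (connE a b); rewrite aS (negbTE bS).
Qed.

Lemma connected_card_edges : connected_graph E -> #|V|.-1 <= #|E|.
Proof.
move=> connE; case: (posnP #|V|) => [-> // | /card_gt0P[r _]].
suff grow k : k < #|V| -> exists S : {set V}, #|S| = k.+1 /\ k <= #|induced S|.
  have [|S [_ le_k]] := grow #|V|.-1; first by rewrite prednK //; apply/card_gt0P; exists r.
  by apply: leq_trans le_k (subset_leq_card _); apply/subsetP => e; rewrite inE => /andP[].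
elim: k => [|k IHk] lt_k; first by exists [set r]; rewrite cards1.
have [S [card_S le_k]] := IHk (ltnW lt_k).
have [b] : exists b, b \in ~: S by apply/card_gt0P; have := cardsC S; lia.
rewrite inE => bS; have /card_gt0P[a aS] : 0 < #|S| by rewrite card_S.
have /exists_inP[u uS /exists_inP[w + uw]] := connected_cut connE aS bS; rewrite inE => wS.
exists (w |: S); split; first by rewrite cardsU1 wS card_S.
have uw_new : [set u; w] \notin induced S.
  by rewrite inE negb_and orbC subUset !sub1set (negbTE wS) andbF.
have : [set u; w] |: induced S \subset induced (w |: S).
  rewrite subUset sub1set inE (andP uw).2 subUset !sub1set !inE eqxx uS orbT /=.
  by apply/subsetP => e; rewrite !inE => /andP[-> /subset_trans]; apply; apply: subsetUr.
by move/subset_leq_card; rewrite cardsU1 uw_new; apply: leq_trans.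
Qed.

Lemma acyclic_no_chord x p y : acyclic E -> uniq (x :: p) -> path (adj E) x p ->
  y \in p -> y != head x p -> ~~ adj E x y.
Proof.
move=> acycE uniq_xp path_xp y_p y_head; apply/negP => xy; apply: acycE.
have lt_i : index y p < size p by rewrite index_mem.
have i_gt0 : 0 < index y p.
  by case: p y_p y_head {uniq_xp path_xp lt_i} => //= z p _; rewrite eq_sym => /negbTE->.
have prefix_y : take (index y p).+1 p = rcons (take (index y p) p) y.
  by rewrite (take_nth x lt_i) nth_index.
exists (x :: take (index y p).+1 p); split.
- by rewrite /= size_takel.
- by have := take_uniq (index y p).+2 uniq_xp.
rewrite /= rcons_path prefix_y last_rcons adj_sym xy andbT -prefix_y.
by apply: take_path; exact: path_xp.
Qed.

Section MinDegree.

Variable S : {set V}.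
Hypothesis acycE : acyclic E.
Hypothesis two_nbrs : forall v, v \in S -> 1 < #|[set w in S | adj E v w]|.

Lemma extend_path_head x p : x \in S -> uniq (x :: p) -> path (adj E) x p ->
  exists2 y, y \in S & (y \notin x :: p) && adj E y x.
Proof.
move=> xS uniq_xp path_xp.
have [y [yS xy y_head]] : exists y, [/\ y \in S, adj E x y & y != head x p].
  have /card_gt1P[a [b [+ + a_neq_b]]] := two_nbrs xS; rewrite !inE => /andP[aS xa] /andP[bS xb].
  case: (eqVneq a (head x p)) => [a_head | ]; last by exists a.
  by exists b; split; rewrite // -a_head eq_sym.
exists y => //; rewrite adj_sym xy andbT inE negb_or eq_sym (adj_neq xy) /=.
by apply: contraL xy => y_p; apply: acyclic_no_chord acycE uniq_xp path_xp y_p y_head.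
Qed.

Lemma acyclic_two_nbrs_set0 : S = set0.
Proof.
apply/eqP; apply: contraT => /set0Pn[v vS].
suff long_path n : exists p, [/\ size p = n.+1, uniq p, all (mem S) p & sorted (adj E) p].
  have [p [size_p uniq_p _ _]] := long_path #|V|.
  by have := max_card (mem p); rewrite (card_uniqP uniq_p) size_p ltnn.
elim: n => [|n [p [size_p uniq_p allS path_p]]]; first by exists [:: v]; rewrite /= vS.
case: p size_p uniq_p allS path_p => [//|x p] size_p uniq_p /andP[xS allS] path_p.
have [y yS /andP[y_new yx]] := extend_path_head xS uniq_p path_p.
exists [:: y, x & p]; split.
- by rewrite -size_p.
- by rewrite cons_uniq y_new uniq_p.
- by apply/and3P.
- by rewrite /= yx.
Qed.

End MinDegree.

Lemma edge_other_end e v : simple_graph E -> e \in E -> v \in e ->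
  exists2 w, adj E v w & e = [set v; w].
Proof.
move=> simpleE e_E; have /eqP/cards2P[a [b [a_neq_b e_ab]]] := simpleE e e_E.
have adj_ab : adj E a b by rewrite /adj a_neq_b -e_ab.
rewrite e_ab !inE => /orP[]/eqP->; first by exists b.
by exists a; rewrite 1?adj_sym // setUC.
Qed.

Lemma acyclic_card_induced S : simple_graph E -> acyclic E -> #|induced S| <= #|S|.-1.
Proof.
move=> simpleE acycE; move card_S : #|S| => n; elim: n S card_S => [|n IHn] S card_S.
  rewrite leqn0 cards_eq0; apply/eqP/setP => e; rewrite !inE; apply/andP => -[e_E e_S].
  by have := subset_leq_card e_S; rewrite simpleE // card_S.
case: (boolP [exists v in S, #|[set w in S | adj E v w]| <= 1]); last first.
  rewrite negb_exists_in => /forall_inP no_leaf.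
  suff S0 : S = set0 by rewrite S0 cards0 in card_S.
  by apply: (acyclic_two_nbrs_set0 acycE) => v /no_leaf; rewrite -ltnNge.
case/exists_inP => v vS leaf_v.
have card_Sv : #|S :\ v| = n by move: card_S; rewrite (cardsD1 v) vS => -[].
pose edges_v := [set e in induced S | v \in e].
have split_v : induced S \subset induced (S :\ v) :|: edges_v.
  apply/subsetP => e; rewrite !inE => /andP[e_E e_S].
  by rewrite subsetD1 e_E e_S /=; case: (v \in e).
have edges_v_le : #|edges_v| <= #|[set w in S | adj E v w]|.
  apply: leq_trans (leq_imset_card (fun w => [set v; w]) _); apply: subset_leq_card.
  apply/subsetP => e; rewrite !inE => /andP[/andP[e_E e_S] v_e].
  have [w vw e_vw] := edge_other_end simpleE e_E v_e; apply/imsetP; exists w => //.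
  by rewrite inE vw andbT (subsetP e_S) // e_vw !inE eqxx orbT.
have nbrs_le : #|[set w in S | adj E v w]| <= n.
  rewrite -card_Sv; apply: subset_leq_card; apply/subsetP => w.
  by rewrite !inE => /andP[-> vw]; rewrite eq_sym (adj_neq vw).
have := IHn _ card_Sv; have := subset_leq_card split_v.
have := (leq_card_setU (induced (S :\ v)) edges_v).1; clearbody edges_v; lia.
Qed.

Lemma tree_card_edges : is_tree E -> #|E| = #|V|.-1.
Proof.
case=> simpleE [connE acycE]; apply/eqP; rewrite eqn_leq connected_card_edges // andbT.
have -> : E = induced setT by apply/setP => e; rewrite !inE subsetT andbT.
by rewrite -cardsT acyclic_card_induced.
Qed.

End Trees.

Section PathGraph.

Variable m : nat.

Definition path_edge (i : 'I_m) : {set 'I_m.+1} := [set widen_ord (leqnSn m) i; lift ord0 i].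

Lemma path_edgesE : path_edges m.+1 = [set path_edge i | i : 'I_m].
Proof.
apply/setP => e; rewrite inE; apply/existsP/imsetP.
  case=> i /existsP[j /andP[/eqP j_succ /eqP->]].
  have lt_im : i < m by rewrite -ltnS -j_succ.
  by exists (Ordinal lt_im); rewrite // /path_edge; congr [set _; _]; apply: val_inj.
case=> i _ ->; exists (widen_ord (leqnSn m) i); apply/existsP; exists (lift ord0 i).
by rewrite /path_edge eqxx andbT.
Qed.

Lemma path_edge_inj : injective path_edge.
Proof.
move=> i j /setP eq_ij; apply: val_inj.
have := eq_ij (widen_ord (leqnSn m) i); have := eq_ij (widen_ord (leqnSn m) j).
rewrite !inE !eqxx /= -!val_eqE /= /bump !leq0n !add1n.
by move=> /orP[/eqP|/eqP] + /esym/orP[/eqP|/eqP]; lia.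
Qed.

Lemma card_path_edges : #|path_edges m.+1| = m.
Proof. by rewrite path_edgesE card_imset ?card_ord //; apply: path_edge_inj. Qed.

Lemma path_edge_in i : path_edge i \in path_edges m.+1.
Proof. by rewrite path_edgesE imset_f. Qed.

Lemma path_deg_gt0 v : 0 < m -> 0 < deg (path_edges m.+1) v.
Proof.
move=> m_gt0; case: (ltnP v m) => [lt_vm | le_mv].
  by apply: deg_gt0 (path_edge_in (Ordinal lt_vm)) _; rewrite !inE -val_eqE eqxx.
have lt_pred : m.-1 < m by rewrite prednK.
apply: deg_gt0 (path_edge_in (Ordinal lt_pred)) _.
by rewrite !inE -!val_eqE /= /bump leq0n add1n prednK //; have := ltn_ord v; lia.
Qed.

Lemma path_card_inner : m.-1 <= #|[set v | 1 < deg (path_edges m.+1) v]|.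
Proof.
case: (posnP m) => [-> // | m_gt0].
have ends : ord0 != ord_max :> 'I_m.+1 by rewrite -val_eqE /= eq_sym -lt0n.
have <- : #|~: [set ord0; ord_max : 'I_m.+1]| = m.-1.
  by have := cardsC [set ord0; ord_max : 'I_m.+1]; rewrite cards2 ends card_ord; lia.
apply: subset_leq_card; apply/subsetP => v; rewrite !inE negb_or -!val_eqE /= => /andP[v_gt0 v_lt].
have lt_vm : v < m by have := ltn_ord v; rewrite ltnS leq_eqVlt (negbTE v_lt).
have lt_pred : v.-1 < m by rewrite prednK ?lt0n // ltnW.
apply: (deg_gt1 (path_edge_in (Ordinal lt_pred)) (path_edge_in (Ordinal lt_vm))).
- by apply/eqP => /path_edge_inj/(congr1 val) /=; lia.
- by rewrite !inE -!val_eqE /= /bump leq0n add1n prednK ?lt0n // eqxx orbT.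
- by rewrite !inE -!val_eqE eqxx.
Qed.

Lemma path_simple : simple_graph (path_edges m.+1).
Proof.
move=> e; rewrite path_edgesE => /imsetP[i _ ->].
by rewrite cards2 -val_eqE /= /bump leq0n add1n neq_ltn ltnSn.
Qed.

End PathGraph.

Section StarGraph.

Variable m : nat.

Lemma star_edgesE : star_edges m.+1 = [set [set ord0; j] | j in [set~ ord0]].
Proof.
apply/setP => e; rewrite inE; apply/existsP/imsetP.
  case=> i /existsP[j /and3P[i0 j0 /eqP->]].
  by exists j; rewrite ?inE //; congr [set _; _]; apply: val_inj; apply/eqP.
case=> j j0 ->; exists ord0; apply/existsP; exists j.
by rewrite !inE in j0; rewrite eqxx andbT -val_eqE in j0 *.
Qed.

Lemma star_simple : simple_graph (star_edges m.+1).
Proof.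
move=> e; rewrite star_edgesE => /imsetP[j]; rewrite !inE => j0 ->.
by rewrite cards2 eq_sym j0.
Qed.

Lemma card_star_edges : #|star_edges m.+1| = m.
Proof.
rewrite star_edgesE card_in_imset ?cardsC1 ?card_ord // => i j; rewrite !inE => i0 _.
by move/setP/(_ i); rewrite !inE eqxx orbT (negbTE i0) /= => /esym/eqP.
Qed.

Lemma star_deg_le1 j : j != ord0 -> deg (star_edges m.+1) j <= 1.
Proof.
move=> j0; rewrite -(cards1 [set ord0; j]); apply: subset_leq_card; apply/subsetP => e.
rewrite star_edgesE !inE => /andP[/imsetP[k _ ->]]; rewrite !inE (negbTE j0) /= => /eqP<-.
by rewrite eqxx.
Qed.

Lemma star_nu_star_ge :
  2 * \sum_(i < ell (star_edges m.+1)) i <= nu_star (star_edges m.+1) + 3 * \sum_(i < m.+1) i.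
Proof.
apply: leq_trans (nu_star_ge_vertex_first star_simple (@cast_ord_inj _ _ (esym (card_ord m.+1)))) _.
rewrite leq_add2l big_distrr leq_sum //= => v _.
by case: (eqVneq v ord0) => [-> | /star_deg_le1]; rewrite ?muln0 //= leq_mul2r; lia.
Qed.

End StarGraph.

Theorem theorem4 (n : nat) (V : finType) (E : {set {set V}}) :
  0 < n -> #|V| = n -> is_tree E ->
  nu_star (path_edges n) <= nu_star E <= nu_star (star_edges n).
Proof.
case: n => [//|[|m]] _ card_V treeE; have [simpleE [connE _]] := treeE.
  by rewrite (nu_star_small (@path_simple 0)) ?card_ord // (nu_star_small simpleE) ?card_V.
have deg_gt0 v : 0 < deg E v by apply: connected_deg_gt0; rewrite ?card_V.
have card_E : #|E| = m.+1 by rewrite tree_card_edges ?card_V.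
have ell_E : ell E = m.+2 + m.+1 by rewrite /ell card_V card_E.
have ell_path : ell (path_edges m.+2) = m.+2 + m.+1 by rewrite /ell card_ord card_path_edges.
have ell_star : ell (star_edges m.+2) = m.+2 + m.+1 by rewrite /ell card_ord card_star_edges.
have path_le := nu_star_le (@path_simple m.+1) (@path_deg_gt0 m.+1 ^~ (ltn0Sn m)).
have inner_le := sum_ord_mono (path_card_inner m.+1).
have tree_ge := nu_star_ge simpleE deg_gt0.
have tree_le := nu_star_le simpleE deg_gt0.
have star_ge := star_nu_star_ge m.+1.
move: path_le inner_le tree_ge tree_le star_ge.
rewrite ell_E ell_path ell_star card_V card_E card_ord /=.
rewrite (_ : 2 * m.+1 - m.+2 = m); last by lia.
move=> *; apply/andP; split; lia.
Qed.
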